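(* Fix $n,d$ and $J\subseteq[n]$ with $|J|=\ell$ such that $\ell\le d<n-\ell$. Then there is a bijection \[ \{C\in\mathcal{P}(n,d):\mathrm{st}(C)=J\}\longleftrightarrow\{C'\in\mathcal{P}(n,d+1):\mathrm{st}(C')=J\}. \]
   Context: $\mathcal{P}(n,d)$ is the set of words $C=C_1\cdots C_n$ in letters $\mathbf{e}$ (east step) and $\mathbf{n}$ (north step) with exactly $d$ letters $\mathbf{e}$. Scan positions left to right and mark position $i$ with $C_i=\mathbf{e}$ if the number of $j<i$ with $C_j=\mathbf{n}$ equals the number of $j<i$ with $C_j=\mathbf{e}$ that are unmarked; $\mathrm{st}(C)$ is the set of unmarked positions $i$ with $C_i=\mathbf{e}$. *)

From mathcomp Require Import all_boot.
Set Implicit Arguments. Unset Strict Implicit. Unset Printing Implicit Defensive.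

(* A word C = C_1 ... C_n in letters e (east) / n (north) is encoded as an
   n.-tuple bool with [true] = e and [false] = n.  Positions are 0-based:
   position i in 'I_n corresponds to the paper's position i+1 in [n]. *)

(* Left-to-right scan.  [i] = current (0-based) position, [nN] = number of
   north steps seen so far, [nU] = number of unmarked east steps seen so far.
   An east step at position i is marked iff nN == nU; the unmarked east
   positions are returned. *)
Fixpoint st_aux (w : seq bool) (i nN nU : nat) : seq nat :=
  match w with
  | [::] => [::]
  | b :: w' =>
      if b then
        (if nN == nU then st_aux w' i.+1 nN nU
         else i :: st_aux w' i.+1 nN nU.+1)
      else st_aux w' i.+1 nN.+1 nU
  end.

Definition st (n : nat) (C : n.-tuple bool) : {set 'I_n} :=
  [set i : 'I_n | nat_of_ord i \in st_aux C 0 0 0].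

Definition inP (n d : nat) (C : n.-tuple bool) : bool := count id C == d.

From mathcomp Require Import all_boot zify.
Set Implicit Arguments. Unset Strict Implicit. Unset Printing Implicit Defensive.

(** Read a word as a bracket sequence: a north step opens a bracket and an east
    step closes an open one if there is any (it is unmarked), and is marked
    otherwise; [st C] is the set of closing east steps. The unmatched letters read
    e...e n...n, and turning the first unmatched n into e, or the last unmatched e
    into n, keeps every matched pair, hence [st]; the two flips are mutually
    inverse. A word of P(n,d) with |st| = l has n-d-l > 0 unmatched n's and a word
    of P(n,d+1) has d+1-l > 0 unmatched e's, so both flips are defined. *)

Lemma sig_bij_of_cancel (T : Type) (P Q : pred T) (f g : T -> T) :
  (forall x, P x -> Q (f x) /\ g (f x) = x) ->
  (forall y, Q y -> P (g y) /\ f (g y) = y) ->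
  exists h : {x | P x} -> {y | Q y}, bijective h.
Proof.
move=> fP gQ.
exists (fun x => exist _ (f (val x)) (proj1 (fP _ (valP x)))).
exists (fun y => exist _ (g (val y)) (proj1 (gQ _ (valP y)))).
- by case=> x Px; apply: val_inj; exact: (fP x Px).2.
- by case=> y Qy; apply: val_inj; exact: (gQ y Qy).2.
Qed.

Lemma eq_cat_cons_lt (T : Type) (u1 v1 u2 v2 : seq T) (b c : T) :
  u1 ++ b :: v1 = u2 ++ c :: v2 -> size u1 < size u2 ->
  exists2 x, u2 = u1 ++ b :: x & v1 = x ++ c :: v2.
Proof.
elim: u1 u2 => [|a u1 IH] [|a2 u2] //= [<- E] lt12; first by exists u2.
by have [x -> ->] := IH _ E lt12; exists x.
Qed.

(* [g] is the gap of the scan: the number of north steps minus the number of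
   unmarked east steps read so far, i.e. the number of open brackets. *)
Fixpoint gap_after (w : seq bool) (g : nat) : nat :=
  if w is b :: w' then gap_after w' (if b then g.-1 else g.+1) else g.

Fixpoint all_unmarked (w : seq bool) (g : nat) : bool :=
  if w is b :: w' then
    if b then (g != 0) && all_unmarked w' g.-1 else all_unmarked w' g.+1
  else true.

Fixpoint st_scan (w : seq bool) (i g : nat) : seq nat :=
  if w is b :: w' then
    if b then (if g == 0 then st_scan w' i.+1 0 else i :: st_scan w' i.+1 g.-1)
    else st_scan w' i.+1 g.+1
  else [::].

Lemma st_aux_st_scan w i nN nU : nU <= nN -> st_aux w i nN nU = st_scan w i (nN - nU).
Proof.
elim: w i nN nU => [|[] w IH] i nN nU le_UN //=; last by rewrite IH ?subSn //; lia.
have [->|ne] := eqVneq nN nU; first by rewrite subnn IH // subnn.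
have -> : (nN - nU == 0) = false by lia.
by rewrite IH; [congr (_ :: st_scan _ _ _) | ]; lia.
Qed.

Lemma gap_after_cat u v g : gap_after (u ++ v) g = gap_after v (gap_after u g).
Proof. by elim: u g => [|b u IH] g //=. Qed.

Lemma all_unmarked_cat u v g :
  all_unmarked (u ++ v) g = all_unmarked u g && all_unmarked v (gap_after u g).
Proof. by elim: u g => [|[] u IH] g //=; rewrite IH ?andbA. Qed.

Lemma st_scan_cat u v i g :
  st_scan (u ++ v) i g = st_scan u i g ++ st_scan v (i + size u) (gap_after u g).
Proof. by elim: u i g => [|[] u IH] i [|g] /=; rewrite ?addn0 ?IH ?addSnnS. Qed.

Lemma gap_afterS v g : all_unmarked v g -> gap_after v g.+1 = (gap_after v g).+1.
Proof. by elim: v g => [|[] v IH] [|g] //= /IH. Qed.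

Lemma st_scanS v i g : all_unmarked v g -> st_scan v i g.+1 = st_scan v i g.
Proof. by elim: v i g => [|[] v IH] i [|g] //= => [/IH ->|/IH|/IH]. Qed.

Lemma gap_after_st_scan w i g :
  gap_after w g + size (st_scan w i g) = g + count (predC id) w.
Proof.
elim: w i g => [|[] w IH] i [|g] /=; rewrite ?addn0 //;
  move: (IH i.+1 0) (IH i.+1 g) (IH i.+1 g.+1) (IH i.+1 g.+2); lia.
Qed.

Lemma size_st_scan_all_unmarked w i g :
  all_unmarked w g -> size (st_scan w i g) = count id w.
Proof. by elim: w i g => [|[] w IH] i [|g] //= => [/IH->|/IH|/IH]. Qed.

Lemma st_scan_subseq w i g : subseq (st_scan w i g) (iota i (size w)).
Proof.
elim: w i g => [|[] w IH] i [|g] //=; rewrite ?eqxx //;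
  exact: subseq_trans (IH _ _) (subseq_cons _ _).
Qed.

Lemma stE n (C : n.-tuple bool) : st C = [set i : 'I_n | val i \in st_scan C 0 0].
Proof. by rewrite /st st_aux_st_scan. Qed.

Lemma card_st n (C : n.-tuple bool) : #|st C| = size (st_scan C 0 0).
Proof.
set s := st_scan C 0 0.
have sub_iota : subseq s (iota 0 n) by have := st_scan_subseq C 0 0; rewrite size_tuple.
have /card_uniqP card_s := pmap_sub_uniq 'I_n (subseq_uniq sub_iota (iota_uniq 0 n)).
have size_s : size (pmap insub s : seq 'I_n) = size s.
  rewrite size_pmap_sub; apply/eqP; rewrite -all_count.
  by apply/allP => x /(mem_subseq sub_iota); rewrite mem_iota.
by rewrite -size_s -card_s stE; apply: eq_card => i; rewrite inE mem_pmap_sub.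
Qed.

(* In [u ++ b :: v] with [pivotal u v], the letter [b] is unmatched, no unmatched
   north step precedes it and no unmatched east step follows it: it is the first
   unmatched north step or the last marked east step. *)
Definition pivotal (u v : seq bool) : bool := (gap_after u 0 == 0) && all_unmarked v 0.

Lemma pivotal_unique b u1 v1 u2 v2 :
  pivotal u1 v1 -> pivotal u2 v2 -> u1 ++ b :: v1 = u2 ++ b :: v2 -> u1 = u2.
Proof.
wlog le12 : u1 v1 u2 v2 / size u1 <= size u2.
  move=> W p1 p2 E; case: (leqP (size u1) (size u2)) => [le|/ltnW le].
    exact: W le p1 p2 E.
  exact/esym/(W _ _ _ _ le p2 p1 (esym E)).
move=> /andP[/eqP gap_u1 un_v1] /andP[/eqP gap_u2 _] E.
case: ltngtP le12 => // [lt12 _|eq12 _]; last first.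
  by move/eqP: E; rewrite eqseq_cat // => /andP[/eqP].
have [x def_u2 def_v1] := eq_cat_cons_lt E lt12; clear E lt12; subst u2 v1.
move: gap_u2 un_v1; rewrite gap_after_cat all_unmarked_cat gap_u1.
case: b => /=; first by move=> -> /and3P[].
by move=> gap_x /andP[un_x _]; rewrite gap_afterS in gap_x.
Qed.

Lemma set_nth_size_cat (T : Type) (x0 y z : T) u v :
  set_nth x0 (u ++ y :: v) (size u) z = u ++ z :: v.
Proof. by elim: u => //= a u ->. Qed.

Definition pivot b w t :=
  [&& t < size w, nth false w t == b & pivotal (take t w) (drop t.+1 w)].

Definition flip b w := set_nth false w (find (pivot b w) (iota 0 (size w))) (~~ b).

Lemma flip_pivotal b u v : pivotal u v -> flip b (u ++ b :: v) = u ++ ~~ b :: v.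
Proof.
move=> puv; set w := u ++ b :: v.
have lt_u_w : size u < size w by rewrite size_cat /= addnS ltnS leq_addr.
have pivot_u : pivot b w (size u).
  rewrite /pivot lt_u_w /w nth_cat ltnn subnn take_size_cat //.
  by rewrite -cat_rcons drop_size_cat ?size_rcons //= eqxx.
have has_pivot : has (pivot b w) (iota 0 (size w)).
  by apply/hasP; exists (size u); rewrite // mem_iota.
pose t := find (pivot b w) (iota 0 (size w)).
have lt_t_w : t < size w by rewrite -(size_iota 0 (size w)) -has_find.
have := nth_find 0 has_pivot; rewrite -/t nth_iota // add0n => /and3P[_ /eqP wt pt].
have def_w : take t w ++ b :: drop t.+1 w = w by rewrite -wt -drop_nth // cat_take_drop.
have eq_t : t = size u by rewrite -(pivotal_unique pt puv def_w) size_takel // ltnW.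
by rewrite /flip -/t eq_t set_nth_size_cat.
Qed.

Lemma north_pivot_exists w :
  0 < gap_after w 0 -> exists u v, w = u ++ false :: v /\ pivotal u v.
Proof.
elim/last_ind: w => [|w b IH] //; rewrite -cats1 gap_after_cat.
have [gap_w|/IH [u [v [def_w /andP[gap_u un_v]]]]] := posnP (gap_after w 0).
  by rewrite gap_w; case: b => // _; exists w, [::]; rewrite /pivotal gap_w.
rewrite def_w gap_after_cat (eqP gap_u) /= gap_afterS // => gap_vb.
exists u, (rcons v b); split; first by rewrite -cats1 -catA.
rewrite /pivotal gap_u -cats1 all_unmarked_cat un_v.
by case: b gap_vb => //=; rewrite andbT -lt0n.
Qed.

Lemma east_pivot_exists w :
  ~~ all_unmarked w 0 -> exists u v, w = u ++ true :: v /\ pivotal u v.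
Proof.
elim/last_ind: w => [|w b IH] //; rewrite -cats1 all_unmarked_cat negb_and.
have [un_b|] := boolP (all_unmarked [:: b] (gap_after w 0)); rewrite ?orbF.
  move=> /IH [u [v [def_w /andP[gap_u un_v]]]].
  exists u, (rcons v b); split; first by rewrite def_w -cats1 -catA.
  move: un_b; rewrite def_w gap_after_cat (eqP gap_u) /=.
  by rewrite /pivotal gap_u -cats1 all_unmarked_cat un_v.
case: b => //=; rewrite andbT negbK => /eqP gap_w _.
by exists w, [::]; rewrite /pivotal gap_w.
Qed.

Lemma st_scan_pivotal u v i : pivotal u v ->
  st_scan (u ++ true :: v) i 0 = st_scan (u ++ false :: v) i 0.
Proof. by case/andP=> /eqP gap_u un_v; rewrite !st_scan_cat gap_u /= st_scanS. Qed.

(* [flip b C] has size [n] only if [C] has a [b]-pivot; otherwise [C] is kept. *)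
Definition flip_tuple n b (C : n.-tuple bool) : n.-tuple bool := insubd C (flip b C).

Section FlipTuple.
Variables (n : nat) (b : bool) (C : n.-tuple bool) (u v : seq bool).
Hypotheses (puv : pivotal u v) (def_C : (C : seq bool) = u ++ b :: v).

Lemma val_flip_tuple : (flip_tuple b C : seq bool) = u ++ ~~ b :: v.
Proof.
rewrite /flip_tuple def_C flip_pivotal // insubdK //.
by rewrite -topredE /= -(size_tuple C) def_C !size_cat.
Qed.

Lemma count_flip_tuple : count id (flip_tuple b C) + b = count id C + ~~ b.
Proof. by rewrite val_flip_tuple def_C !count_cat /=; case: b; lia. Qed.

Lemma st_flip_tuple : st (flip_tuple b C) = st C.
Proof.
by rewrite !stE val_flip_tuple def_C; case: b; rewrite /= ?st_scan_pivotal.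
Qed.

End FlipTuple.

Lemma flip_tupleK n b (C : n.-tuple bool) u v :
  pivotal u v -> (C : seq bool) = u ++ b :: v -> flip_tuple (~~ b) (flip_tuple b C) = C.
Proof.
move=> puv def_C; apply: val_inj => /=.
by rewrite (val_flip_tuple puv (val_flip_tuple puv def_C)) negbK def_C.
Qed.

Lemma north_pivot_tuple n d (C : n.-tuple bool) :
  inP d C -> #|st C| + d < n -> exists u v, (C : seq bool) = u ++ false :: v /\ pivotal u v.
Proof.
move=> /eqP dC lt_n; apply: north_pivot_exists.
have := gap_after_st_scan C 0 0; have := count_predC id C.
by rewrite size_tuple dC -card_st; lia.
Qed.

Lemma east_pivot_tuple n d (C : n.-tuple bool) :
  inP d.+1 C -> #|st C| <= d -> exists u v, (C : seq bool) = u ++ true :: v /\ pivotal u v.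
Proof.
move=> /eqP dC le_d; apply: east_pivot_exists.
apply: contraTN le_d => /(size_st_scan_all_unmarked 0).
by rewrite -card_st dC => ->; rewrite ltnn.
Qed.

Theorem lemma4p13 (n d : nat) (J : {set 'I_n}) :
  #|J| <= d -> d < n - #|J| ->
  exists f : {C : n.-tuple bool | inP d C && (st C == J)} ->
             {C : n.-tuple bool | inP d.+1 C && (st C == J)},
    bijective f.
Proof.
move=> le_J_d lt_d_n.
apply: (@sig_bij_of_cancel _ (fun C => inP d C && (st C == J))
          (fun C => inP d.+1 C && (st C == J)) (flip_tuple false) (flip_tuple true))
  => C /andP[dC /eqP stC].
- have /(north_pivot_tuple dC) [u [v [def_C puv]]] : #|st C| + d < n by rewrite stC; lia.
  split; last exact: flip_tupleK puv def_C.
  rewrite (st_flip_tuple puv def_C) stC eqxx andbT /inP.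
  by have := count_flip_tuple puv def_C; move/eqP: dC; lia.
- have /(east_pivot_tuple dC) [u [v [def_C puv]]] : #|st C| <= d by rewrite stC.
  split; last exact: flip_tupleK puv def_C.
  rewrite (st_flip_tuple puv def_C) stC eqxx andbT /inP.
  by have := count_flip_tuple puv def_C; move/eqP: dC; lia.
Qed.
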